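(* Let $t\ge 2$ and $w\ge 1$ be integers, $u=\lfloor(\frac{t}{2}+1)^2\rfloor$, and let $(\mathcal{X},\mathcal{B})$ be a $(w,v)$ set system. If $\mathcal{F}=\{\mathcal{F}_1,\dots,\mathcal{F}_m\}$ is a minimal forbidden configuration in $\mathcal{B}$ containing $s$ distinct blocks, where $2\le s\le u$ (i.e. $|U(\mathcal{F})|=s$), then $$\Big|\bigcup_{B\in U(\mathcal{F})}B\Big|=\Big|\bigcup_{1\le i\le m}\bigcup_{B\in\mathcal{F}_i}B\Big|\le\min\{(s-1)w,\ v\}.$$
   Context: A $(w,v)$ set system is a pair $(\mathcal{X},\mathcal{B})$ with $|\mathcal{X}|=v$ and $\mathcal{B}$ a family of $w$-element subsets (blocks) of $\mathcal{X}$. A configuration in $\mathcal{B}$ is a collection $\mathcal{F}=\{\mathcal{F}_1,\dots,\mathcal{F}_m\}$ with $\mathcal{F}_i\subseteq\mathcal{B}$, $|\mathcal{F}_i|\le t$, and $\bigcap_i\mathcal{F}_i=\emptyset$; it is minimal if $\bigcap_{j\ne i}\mathcal{F}_j\neq\emptyset$ for every $i$. $U(\mathcal{F})=\bigcup_i\mathcal{F}_i$. A (minimal) forbidden configuration in $\mathcal{B}$ is a (minimal) configuration with $\big|\bigcap_{i=1}^m\big(\bigcup_{B\in\mathcal{F}_i}B\big)\big|\ge w$. *)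

From mathcomp Require Import all_boot.
Set Implicit Arguments. Unset Strict Implicit. Unset Printing Implicit Defensive.

(* A (w,v) set system: point set = finType T with #|T| = v, blocks = family
   B : {set {set T}} of w-element subsets.  A configuration with m members is
   F : 'I_m -> {set {set T}}. *)

Definition set_system (T : finType) (w v : nat) (B : {set {set T}}) : Prop :=
  #|T| = v /\ (forall b, b \in B -> #|b| = w).

Definition blocks_union (T : finType) (G : {set {set T}}) : {set T} :=
  \bigcup_(b in G) b.

Definition UF (T : finType) (m : nat) (F : 'I_m -> {set {set T}}) : {set {set T}} :=
  \bigcup_(i < m) F i.

Definition configuration (T : finType) (t : nat) (B : {set {set T}})
    (m : nat) (F : 'I_m -> {set {set T}}) : Prop :=
  (forall i, F i \subset B) /\ (forall i, #|F i| <= t) /\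
  \bigcap_(i < m) F i = set0.

Definition minimal_configuration (T : finType) (t : nat) (B : {set {set T}})
    (m : nat) (F : 'I_m -> {set {set T}}) : Prop :=
  configuration t B F /\ (forall i : 'I_m, \bigcap_(j < m | j != i) F j != set0).

Definition minimal_forbidden_configuration (T : finType) (t w : nat)
    (B : {set {set T}}) (m : nat) (F : 'I_m -> {set {set T}}) : Prop :=
  minimal_configuration t B F /\ w <= #|\bigcap_(i < m) blocks_union (F i)|.

From mathcomp Require Import all_boot.
From mathcomp Require Import zify.

Set Implicit Arguments.
Unset Strict Implicit.
Unset Printing Implicit Defensive.

(* Double counting.  Count the incidences (x, b) with b a block of U = U(F)
   and x in b: there are s * w of them.  Every point of the union Y of the
   blocks is in at least one block, and every point of the intersection X of
   the unions of the F_i is in at least two: a block b containing x lies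
   outside some F_j (the F_i have empty intersection), while x is covered by
   some block of F_j.  Hence |Y| + w <= |Y| + |X| <= s * w. *)

Definition degree (T : finType) (U : {set {set T}}) (x : T) : nat :=
  #|[set b in U | x \in b]|.

Lemma blocks_union_bigcup (T I : finType) (F : I -> {set {set T}}) :
  blocks_union (\bigcup_i F i) = \bigcup_i blocks_union (F i).
Proof.
apply/setP => x; apply/bigcupP/bigcupP.
  by move=> [b /bigcupP [i _ bFi] xb]; exists i => //; apply/bigcupP; exists b.
by move=> [i _ /bigcupP [b bFi xb]]; exists b => //; apply/bigcupP; exists i.
Qed.

Lemma sum_card_blocks (T : finType) (U : {set {set T}}) :
  \sum_(b in U) #|b| = \sum_x degree U x.
Proof.
under eq_bigr => b _ do rewrite -sum1_card.
rewrite (exchange_big_dep predT) //=; apply: eq_bigr => x _.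
by rewrite /degree -sum1_card; apply: eq_bigl => b; rewrite inE.
Qed.

Lemma sum_card_uniform (T : finType) (U : {set {set T}}) (w : nat) :
  (forall b, b \in U -> #|b| = w) -> \sum_(b in U) #|b| = #|U| * w.
Proof. by move=> cardU; rewrite (eq_bigr _ cardU) sum_nat_const. Qed.

Lemma degree_gt0 (T : finType) (U : {set {set T}}) (x : T) :
  (0 < degree U x) = (x \in blocks_union U).
Proof.
apply/card_gt0P/bigcupP => [[b] | [b bU xb]]; last by exists b; rewrite inE bU.
by rewrite inE => /andP [bU xb]; exists b.
Qed.

Lemma card_blocks_union_add_multiple (T : finType) (U : {set {set T}}) :
  #|blocks_union U| + #|[set x | 1 < degree U x]| <= \sum_(b in U) #|b|.
Proof.
rewrite sum_card_blocks -!sum1_card big_mkcond [X in _ + X]big_mkcond -big_split.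
apply: leq_sum => x _; rewrite inE -degree_gt0.
by case: (degree U x) => [|[|d]].
Qed.

Lemma degree_bigcap_blocks_union (T I : finType) (F : I -> {set {set T}}) x :
  \bigcap_i F i = set0 -> x \in \bigcap_i blocks_union (F i) ->
  1 < degree (\bigcup_i F i) x.
Proof.
move=> capF /bigcapP xX.
have outside b : exists j, b \notin F j.
  apply/existsP; apply: contraT; rewrite negb_exists => /forallP inF.
  have : b \in \bigcap_i F i by apply/bigcapP => j _; rewrite -[_ \in _]negbK inF.
  by rewrite capF inE.
have [j _] := outside set0.
have /bigcupP [b1 b1F xb1] := xX j isT.
have [k b1Fk] := outside b1.
have /bigcupP [b2 b2F xb2] := xX k isT.
have b21 : b2 != b1 by apply: contraNneq b1Fk => <-.
have inU i b : b \in F i -> b \in \bigcup_i F i by move=> bFi; apply/bigcupP; exists i.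
have pair_sub : [set b2; b1] \subset [set b in \bigcup_i F i | x \in b].
  apply/subsetP => b; rewrite !inE => /orP [] /eqP ->.
    by rewrite xb2 (inU k _ b2F).
  by rewrite xb1 (inU j _ b1F).
by apply: leq_trans (subset_leq_card pair_sub); rewrite cards2 b21.
Qed.

(* u = floor((t/2 + 1)^2) = floor((t+2)^2 / 4) *)
Theorem lemma2 (t w v : nat) (T : finType) (B : {set {set T}})
    (m : nat) (F : 'I_m -> {set {set T}}) (s : nat) :
  2 <= t -> 1 <= w ->
  set_system w v B ->
  minimal_forbidden_configuration t w B F ->
  #|UF F| = s -> 2 <= s -> s <= (t + 2) ^ 2 %/ 4 ->
  #|blocks_union (UF F)| = #|\bigcup_(i < m) blocks_union (F i)| /\
  #|blocks_union (UF F)| <= minn ((s - 1) * w) v.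
Proof.
move=> _ _ [cardT cardB] [[[subB [_ capF]] _] forbidden] cardU _ _.
split; first by rewrite blocks_union_bigcup.
have uniform b : b \in UF F -> #|b| = w.
  by move=> /bigcupP [i _ bFi]; apply: cardB; apply: (subsetP (subB i)).
have multiple : \bigcap_(i < m) blocks_union (F i) \subset [set x | 1 < degree (UF F) x].
  by apply/subsetP => x xX; rewrite inE; apply: degree_bigcap_blocks_union.
have := card_blocks_union_add_multiple (UF F).
rewrite (sum_card_uniform uniform) cardU => incidences.
have := subset_leq_card multiple.
rewrite leq_min -cardT max_card andbT mulnBl mul1n; lia.
Qed.
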